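(* Let $\beta,\delta\in(0,1)$, $K>0$, and let $\eta_1,\eta_2\ge0$ be constants. Consider $$\frac{df}{dt}=\tfrac12 fm\beta L-\delta f-\eta_1 f^{3/2},\qquad \frac{dm}{dt}=\tfrac12 fm\beta L-\delta m-\eta_2 m^{3/2},\qquad L=1-\frac{f+m}{K}.$$ If $\beta K<2\delta$, then the trivial equilibrium $(0,0)$ is globally asymptotically stable.
   Context: $f,m$ are female and male densities, with populations considered in the region $0\le f,m$, $f+m\le K$. The model uses power-law harvesting of both females and males. *)

From Stdlib Require Import Reals.
Open Scope R_scope.

(* x^{3/2}, used only for x >= 0 (on the region of interest). *)
Definition pow32 (x : R) : R := x * sqrt x.

Definition Lterm (K f m : R) : R := 1 - (f + m) / K.

Definition rhs_f (beta delta eta1 K f m : R) : R :=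
  / 2 * f * m * beta * Lterm K f m - delta * f - eta1 * pow32 f.
Definition rhs_m (beta delta eta2 K f m : R) : R :=
  / 2 * f * m * beta * Lterm K f m - delta * m - eta2 * pow32 m.

Definition in_region (K f m : R) : Prop := 0 <= f /\ 0 <= m /\ f + m <= K.

Definition is_solution (beta delta eta1 eta2 K : R) (f m : R -> R) : Prop :=
  (forall t, 0 < t ->
     derivable_pt_lim f t (rhs_f beta delta eta1 K (f t) (m t)) /\
     derivable_pt_lim m t (rhs_m beta delta eta2 K (f t) (m t))) /\
  (forall eps, 0 < eps -> exists d, 0 < d /\
     forall t, 0 <= t < d -> Rabs (f t - f 0) < eps /\ Rabs (m t - m 0) < eps).

Definition GAS_origin (beta delta eta1 eta2 K : R) : Prop :=
  rhs_f beta delta eta1 K 0 0 = 0 /\ rhs_m beta delta eta2 K 0 0 = 0 /\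
  (forall eps, 0 < eps -> exists d, 0 < d /\
     forall f m : R -> R, is_solution beta delta eta1 eta2 K f m ->
       in_region K (f 0) (m 0) -> Rabs (f 0) + Rabs (m 0) < d ->
       forall t, 0 <= t -> Rabs (f t) + Rabs (m t) < eps) /\
  (forall f m : R -> R, is_solution beta delta eta1 eta2 K f m ->
     in_region K (f 0) (m 0) ->
     forall eps, 0 < eps -> exists T, forall t, T <= t ->
       Rabs (f t) + Rabs (m t) < eps).

(* The quadrant [f, m >= 0] is forward invariant: where [f < 0] the equation
   for [f] reads [f' = c(t) f] with [c] bounded on compact time intervals, so
   comparison with an exponential keeps [f] from crossing zero; likewise for
   [m]. On the quadrant [f m L <= K (f + m) / 4], so the total population
   [S = f + m] satisfies [S' <= (beta K / 4 - delta) S <= - (delta / 2) S] and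
   decays exponentially, which yields both stability and attractivity. *)

From Stdlib Require Import Reals Lra.
Open Scope R_scope.

Lemma derivable_pt_lim_exp_scal c x :
  derivable_pt_lim (fun s => exp (c * s)) x (c * exp (c * x)).
Proof.
rewrite Rmult_comm.
apply (derivable_pt_lim_comp (fun s => c * s) exp).
- pose proof (derivable_pt_lim_scal id c x 1 (derivable_pt_lim_id x)) as H.
  rewrite Rmult_1_r in H; exact H.
- apply derivable_pt_lim_exp.
Qed.

Definition right_continuous_at (u : R -> R) (t : R) : Prop :=
  forall e, 0 < e -> exists d, 0 < d /\
    forall s, t <= s < t + d -> Rabs (u s - u t) < e.

Lemma continuity_pt_ball (u : R -> R) t : continuity_pt u t ->
  forall e, 0 < e -> exists d, 0 < d /\
    forall s, Rabs (s - t) < d -> Rabs (u s - u t) < e.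
Proof.
intros Hc e He. destruct (Hc e He) as [d [Hd Hu]].
exists d; split; [exact Hd|]. intros s Hs.
destruct (Req_dec s t) as [->|Hst].
- rewrite Rminus_diag, Rabs_R0; exact He.
- apply Hu. split; [split; [exact I|auto]|exact Hs].
Qed.

Lemma continuity_pt_right_continuous (u : R -> R) t :
  continuity_pt u t -> right_continuous_at u t.
Proof.
intros Hc e He. destruct (continuity_pt_ball u t Hc e He) as [d [Hd Hu]].
exists d; split; [exact Hd|]. intros s Hs. apply Hu. rewrite Rabs_right; lra.
Qed.

Lemma right_continuous_at_minus (u v : R -> R) t :
  right_continuous_at u t -> right_continuous_at v t ->
  right_continuous_at (fun s => u s - v s) t.
Proof.
intros Hu Hv e He.
destruct (Hu (e / 2) ltac:(lra)) as [du [Hdu Hu']].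
destruct (Hv (e / 2) ltac:(lra)) as [dv [Hdv Hv']].
exists (Rmin du dv); split; [now apply Rmin_glb_lt|].
intros s Hs. pose proof (Rmin_l du dv). pose proof (Rmin_r du dv).
destruct (Rabs_def2 _ _ (Hu' s ltac:(lra))).
destruct (Rabs_def2 _ _ (Hv' s ltac:(lra))).
apply Rabs_def1; lra.
Qed.

Lemma last_nonneg_point (u : R -> R) a b :
  a < b -> 0 <= u a -> u b < 0 ->
  (forall t, a < t <= b -> continuity_pt u t) ->
  exists T, a <= T < b /\ 0 <= u T /\ forall t, T < t <= b -> u t < 0.
Proof.
intros Hab Hua Hub Hc.
set (E := fun s => a <= s <= b /\ 0 <= u s).
destruct (completeness E) as [T [HT_ub HT_lub]].
- exists b. intros x Hx. apply Hx.
- exists a. split; [lra|exact Hua].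
- assert (HaT : a <= T) by (apply HT_ub; split; [lra|exact Hua]).
  assert (HTb : T <= b) by (apply HT_lub; intros x Hx; apply Hx).
  assert (HuT : 0 <= u T).
  { destruct (Req_dec T a) as [->|HTa]; [exact Hua|].
    destruct (Rlt_or_le (u T) 0) as [HuT|]; [exfalso|assumption].
    destruct (continuity_pt_ball u T (Hc T ltac:(lra)) (- u T) ltac:(lra))
      as [d [Hd Hu]].
    assert (T <= T - d); [|lra].
    apply HT_lub. intros x [Hx Hux].
    destruct (Rle_or_lt x (T - d)) as [|Hlt]; [assumption|exfalso].
    assert (x <= T) by (apply HT_ub; split; assumption).
    destruct (Rabs_def2 _ _ (Hu x ltac:(rewrite Rabs_left1; lra))). lra. }
  exists T. split; [split; [exact HaT|]|split; [exact HuT|]].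
  + destruct (Req_dec T b) as [->|]; lra.
  + intros t Ht. destruct (Rlt_or_le (u t) 0) as [|Hut]; [assumption|].
    assert (t <= T) by (apply HT_ub; split; [lra|exact Hut]). lra.
Qed.

(* [u e^{-Ct}] is nondecreasing when [u' >= C u]. *)
Lemma le_mul_exp_of_deriv_ge (u du : R -> R) s b C :
  s < b -> (forall t, s <= t <= b -> derivable_pt_lim u t (du t)) ->
  (forall t, s <= t <= b -> C * u t <= du t) ->
  u s <= u b * exp (C * (s - b)).
Proof.
intros Hsb Hd Hdu.
destruct (MVT_cor2 (fun t => u t * exp (- C * t))
  (fun t => du t * exp (- C * t) + u t * (- C * exp (- C * t))) s b Hsb)
  as [c [Hc Hcsb]].
{ intros t Ht. apply (derivable_pt_lim_mult u (fun t => exp (- C * t))).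
  - exact (Hd t Ht).
  - apply derivable_pt_lim_exp_scal. }
assert (Hw : u s * exp (- C * s) <= u b * exp (- C * b)).
{ specialize (Hdu c ltac:(lra)). pose proof (exp_pos (- C * c)).
  assert (0 <= (du c - C * u c) * exp (- C * c) * (b - s))
    by (apply Rmult_le_pos; [apply Rmult_le_pos|]; lra).
  lra. }
assert (Hs : exp (- C * s) * exp (C * s) = 1)
  by (rewrite <- exp_plus, <- exp_0; f_equal; ring).
assert (Hb : exp (- C * b) * exp (C * s) = exp (C * (s - b)))
  by (rewrite <- exp_plus; f_equal; ring).
pose proof (exp_pos (C * s)).
apply (Rmult_le_compat_r (exp (C * s))) in Hw; [|lra].
rewrite Rmult_assoc, Hs, Rmult_assoc, Hb in Hw. lra.
Qed.

Lemma nonneg_of_deriv_ge_on_neg (u du : R -> R) a b C :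
  a < b -> 0 <= C -> right_continuous_at u a -> 0 <= u a ->
  (forall t, a < t <= b -> derivable_pt_lim u t (du t)) ->
  (forall t, a < t <= b -> u t < 0 -> C * u t <= du t) ->
  0 <= u b.
Proof.
intros Hab HC Hra Hua Hd Hdu.
destruct (Rlt_or_le (u b) 0) as [Hub|]; [exfalso|assumption].
assert (Hc : forall t, a < t <= b -> continuity_pt u t)
  by (intros t Ht; apply derivable_continuous_pt; exists (du t); exact (Hd t Ht)).
destruct (last_nonneg_point u a b Hab Hua Hub Hc) as [T [HT [HuT Hneg]]].
assert (HrT : right_continuous_at u T).
{ destruct (Req_dec T a) as [->|]; [exact Hra|].
  apply continuity_pt_right_continuous, Hc; lra. }
set (k := exp (C * (a - b))).
assert (Hk : 0 < k) by apply exp_pos.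
(* On [(T, b)] the growth bound keeps [u] below [k u(b) < 0], contradicting right continuity at [T]. *)
assert (Hbelow : forall s, T < s < b -> u s <= u b * k).
{ intros s Hs.
  assert (k <= exp (C * (s - b))).
  { unfold k. destruct (Req_dec C 0) as [->|]; [right; f_equal; ring|].
    left; apply exp_increasing; nra. }
  pose proof (le_mul_exp_of_deriv_ge u du s b C ltac:(lra)
    ltac:(intros t Ht; apply Hd; lra)
    ltac:(intros t Ht; apply Hdu, Hneg; lra)).
  nra. }
destruct (HrT (- (u b * k)) ltac:(nra)) as [d [Hd0 Hu]].
set (s := T + Rmin d (b - T) / 2).
pose proof (Rmin_l d (b - T)). pose proof (Rmin_r d (b - T)).
pose proof (Rmin_glb_lt d (b - T) 0 Hd0 ltac:(lra)).
destruct (Rabs_def2 _ _ (Hu s ltac:(unfold s; lra))).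
specialize (Hbelow s ltac:(unfold s; lra)). lra.
Qed.

Lemma bounded_on_interval (u : R -> R) a b :
  right_continuous_at u a -> (forall t, a < t <= b -> continuity_pt u t) ->
  exists M, forall t, a <= t <= b -> Rabs (u t) <= M.
Proof.
intros Hra Hc.
destruct (Hra 1 ltac:(lra)) as [d [Hd Hu]].
assert (Hnear : forall t, a <= t < a + d -> Rabs (u t) <= Rabs (u a) + 1).
{ intros t Ht. specialize (Hu t Ht).
  pose proof (Rabs_triang_inv (u t) (u a)). lra. }
set (c := a + d / 2).
destruct (Rle_or_lt c b) as [Hcb|Hbc].
- destruct (continuity_ab_maj (fun t => Rabs (u t)) c b Hcb) as [x [Hx _]].
  { intros t Ht. apply (continuity_pt_comp u Rabs).
    - apply Hc. unfold c in Ht; lra.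
    - apply Rcontinuity_abs. }
  exists (Rmax (Rabs (u a) + 1) (Rabs (u x))). intros t Ht.
  destruct (Rlt_or_le t c).
  + eapply Rle_trans; [apply Hnear; unfold c in *; lra|apply Rmax_l].
  + eapply Rle_trans; [apply Hx; lra|apply Rmax_r].
- exists (Rabs (u a) + 1). intros t Ht. apply Hnear. unfold c in *; lra.
Qed.

Lemma exp_neg_mul_le_1 c t : 0 <= c * t -> exp (- c * t) <= 1.
Proof.
intros Hct. rewrite <- exp_0.
destruct (Req_dec (c * t) 0) as [H0|H0].
- right. f_equal. lra.
- left. apply exp_increasing. lra.
Qed.

Lemma exp_decay_eventually_lt c A eps : 0 < c -> 0 <= A -> 0 < eps ->
  exists T, 0 <= T /\ forall t, T <= t -> A * exp (- c * t) < eps.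
Proof.
intros Hc HA Heps. exists (A / (c * eps)).
assert (HT : 0 <= A / (c * eps)) by (apply Rle_mult_inv_pos; nra).
split; [exact HT|]. intros t Ht.
assert (HA_le : A <= c * eps * t).
{ apply (Rmult_le_compat_l (c * eps)) in Ht; [|nra].
  replace (c * eps * (A / (c * eps))) with A in Ht by (field; lra). exact Ht. }
assert (Hinv : exp (- c * t) * exp (c * t) = 1)
  by (rewrite <- exp_plus, <- exp_0; f_equal; ring).
pose proof (exp_ineq1_le (c * t)). pose proof (exp_pos (- c * t)).
(* [A e^{-ct} <= eps c t e^{-ct} < eps (1 + c t) e^{-ct} <= eps] *)
assert (A * exp (- c * t) <= eps * (c * t) * exp (- c * t))
  by (apply Rmult_le_compat_r; lra).
assert (eps * exp (- c * t) * (1 + c * t) <= eps * exp (- c * t) * exp (c * t))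
  by (apply Rmult_le_compat_l; [apply Rmult_le_pos|]; lra).
nra.
Qed.

Section Model.

Variables (beta delta K : R).
Hypotheses (Hbeta : 0 <= beta) (HK : 0 < K).

Lemma Lterm_abs_le x y : Rabs (Lterm K x y) <= 1 + (Rabs x + Rabs y) / K.
Proof.
unfold Lterm, Rminus. eapply Rle_trans; [apply Rabs_triang|].
rewrite Rabs_Ropp, Rabs_R1. apply Rplus_le_compat_l.
unfold Rdiv. rewrite Rabs_mult, Rabs_inv, (Rabs_right K) by lra.
apply Rmult_le_compat_r; [left; apply Rinv_0_lt_compat; lra|apply Rabs_triang].
Qed.

Lemma growth_coefficient_le x y M : 0 <= delta -> Rabs x <= M -> Rabs y <= M ->
  / 2 * y * beta * Lterm K x y - delta <= beta * M * (1 + 2 * M / K).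
Proof.
intros Hdelta Hx Hy.
pose proof (Lterm_abs_le x y) as HL.
assert (HLM : Rabs (Lterm K x y) <= 1 + 2 * M / K).
{ eapply Rle_trans; [exact HL|]. apply Rplus_le_compat_l.
  unfold Rdiv. apply Rmult_le_compat_r; [left; apply Rinv_0_lt_compat|]; lra. }
pose proof (Rle_abs (y * Lterm K x y)) as Hyl.
rewrite Rabs_mult in Hyl.
assert (Rabs y * Rabs (Lterm K x y) <= M * (1 + 2 * M / K))
  by (apply Rmult_le_compat; try apply Rabs_pos; assumption).
assert (beta * (y * Lterm K x y) <= beta * (M * (1 + 2 * M / K)))
  by (apply Rmult_le_compat_l; lra).
assert (0 <= beta * (M * (1 + 2 * M / K))).
{ apply Rmult_le_pos; [lra|]. eapply Rle_trans; [|exact H]. apply Rmult_le_pos; apply Rabs_pos. }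
nra.
Qed.

(* [sqrt] is [0] on negative reals, so the harvesting term vanishes. *)
Lemma rhs_f_of_neg eta x y : x < 0 ->
  rhs_f beta delta eta K x y = x * (/ 2 * y * beta * Lterm K x y - delta).
Proof. intros Hx. unfold rhs_f, pow32. rewrite (sqrt_neg_0 x) by lra. ring. Qed.

Lemma rhs_m_swap eta x y : rhs_m beta delta eta K x y = rhs_f beta delta eta K y x.
Proof. unfold rhs_m, rhs_f, Lterm. rewrite (Rplus_comm x y). ring. Qed.

Lemma is_solution_swap eta1 eta2 f m :
  is_solution beta delta eta1 eta2 K f m -> is_solution beta delta eta2 eta1 K m f.
Proof.
intros [Hd H0]. split.
- intros t Ht. destruct (Hd t Ht) as [Hf Hm].
  rewrite rhs_m_swap in Hm. rewrite <- rhs_m_swap in Hf. split; assumption.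
- intros e He. destruct (H0 e He) as [d [Hd0 Hfm]].
  exists d; split; [exact Hd0|]. intros t Ht. apply and_comm, Hfm, Ht.
Qed.

Lemma solution_continuity_pt eta1 eta2 f m t :
  is_solution beta delta eta1 eta2 K f m -> 0 < t -> continuity_pt f t.
Proof.
intros [Hd _] Ht. apply derivable_continuous_pt.
exists (rhs_f beta delta eta1 K (f t) (m t)). apply (Hd t Ht).
Qed.

Lemma solution_right_continuous_0 eta1 eta2 f m :
  is_solution beta delta eta1 eta2 K f m -> right_continuous_at f 0.
Proof.
intros [_ H0] e He. destruct (H0 e He) as [d [Hd Hf]].
exists d; split; [exact Hd|]. intros s Hs. apply Hf. lra.
Qed.

Lemma solution_bounded eta1 eta2 f m b :
  is_solution beta delta eta1 eta2 K f m ->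
  exists M, forall t, 0 <= t <= b -> Rabs (f t) <= M.
Proof.
intros Hsol. apply bounded_on_interval.
- exact (solution_right_continuous_0 _ _ _ _ Hsol).
- intros t Ht. apply (solution_continuity_pt _ _ _ _ _ Hsol). lra.
Qed.

Lemma solution_fst_nonneg eta1 eta2 f m : 0 <= delta ->
  is_solution beta delta eta1 eta2 K f m -> 0 <= f 0 -> forall t, 0 <= t -> 0 <= f t.
Proof.
intros Hdelta Hsol Hf0 t Ht.
destruct (Req_dec t 0) as [->|Htn]; [exact Hf0|].
destruct (solution_bounded _ _ _ _ t Hsol) as [Mf HMf].
destruct (solution_bounded _ _ _ _ t (is_solution_swap _ _ _ _ Hsol)) as [Mm HMm].
set (M := Rmax Mf Mm).
assert (HM : 0 <= M).
{ eapply Rle_trans; [apply Rabs_pos|]. eapply Rle_trans; [apply (HMf 0); lra|apply Rmax_l]. }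
apply (nonneg_of_deriv_ge_on_neg f (fun s => rhs_f beta delta eta1 K (f s) (m s))
  0 t (beta * M * (1 + 2 * M / K))); try lra.
- apply Rmult_le_pos; [apply Rmult_le_pos; lra|].
  assert (0 <= 2 * M / K) by (apply Rle_mult_inv_pos; lra). lra.
- exact (solution_right_continuous_0 _ _ _ _ Hsol).
- intros s Hs. apply (proj1 Hsol s ltac:(lra)).
- intros s Hs Hfs. rewrite rhs_f_of_neg by exact Hfs.
  assert (Hc : / 2 * m s * beta * Lterm K (f s) (m s) - delta <= beta * M * (1 + 2 * M / K)).
  { apply growth_coefficient_le; [exact Hdelta| |].
    - eapply Rle_trans; [apply HMf; lra|apply Rmax_l].
    - eapply Rle_trans; [apply HMm; lra|apply Rmax_r]. }
  nra.
Qed.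

Lemma solution_nonneg eta1 eta2 f m : 0 <= delta ->
  is_solution beta delta eta1 eta2 K f m -> 0 <= f 0 -> 0 <= m 0 ->
  forall t, 0 <= t -> 0 <= f t /\ 0 <= m t.
Proof.
intros Hdelta Hsol Hf0 Hm0 t Ht. split.
- exact (solution_fst_nonneg _ _ _ _ Hdelta Hsol Hf0 t Ht).
- exact (solution_fst_nonneg _ _ _ _ Hdelta (is_solution_swap _ _ _ _ Hsol) Hm0 t Ht).
Qed.

Lemma mating_term_le x y : 0 <= x -> 0 <= y -> x * y * Lterm K x y <= K / 4 * (x + y).
Proof.
intros Hx Hy.
assert (HL : Lterm K x y * K = K - (x + y))
  by (unfold Lterm; field; lra).
assert (Hxy : 0 <= x * y) by (apply Rmult_le_pos; assumption).
destruct (Rle_or_lt (x + y) K) as [HS|HS].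
- assert (Lterm K x y <= 1).
  { apply (Rmult_le_reg_r K); [exact HK|]. lra. }
  assert (x * y * Lterm K x y <= x * y) by (rewrite <- (Rmult_1_r (x * y)) at 2; apply Rmult_le_compat_l; assumption).
  assert (4 * (x * y) <= (x + y) * (x + y)) by (pose proof (Rle_0_sqr (x - y)); unfold Rsqr in *; lra).
  assert ((x + y) * (x + y) <= K * (x + y)) by (apply Rmult_le_compat_r; lra).
  lra.
- assert (Lterm K x y < 0) by (apply (Rmult_lt_reg_r K); lra).
  assert (x * y * Lterm K x y <= 0) by nra.
  assert (0 <= K / 4 * (x + y)) by (apply Rmult_le_pos; lra).
  lra.
Qed.

Lemma rhs_sum_le eta1 eta2 x y :
  beta * K < 2 * delta -> 0 <= eta1 -> 0 <= eta2 -> 0 <= x -> 0 <= y ->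
  rhs_f beta delta eta1 K x y + rhs_m beta delta eta2 K x y <= - (delta / 2) * (x + y).
Proof.
intros HbK He1 He2 Hx Hy. unfold rhs_f, rhs_m, pow32.
pose proof (mating_term_le x y Hx Hy) as Hmate.
assert (Hb : beta * (x * y * Lterm K x y) <= beta * (K / 4 * (x + y)))
  by (apply Rmult_le_compat_l; assumption).
assert (0 <= eta1 * (x * sqrt x))
  by (apply Rmult_le_pos; [|apply Rmult_le_pos; [|apply sqrt_pos]]; assumption).
assert (0 <= eta2 * (y * sqrt y))
  by (apply Rmult_le_pos; [|apply Rmult_le_pos; [|apply sqrt_pos]]; assumption).
assert (beta * K * (x + y) <= 2 * delta * (x + y)) by (apply Rmult_le_compat_r; lra).
nra.
Qed.

Lemma solution_sum_decay eta1 eta2 f m :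
  beta * K < 2 * delta -> 0 <= eta1 -> 0 <= eta2 ->
  is_solution beta delta eta1 eta2 K f m -> 0 <= f 0 -> 0 <= m 0 ->
  forall t, 0 <= t -> f t + m t <= (f 0 + m 0) * exp (- (delta / 2) * t).
Proof.
intros HbK He1 He2 Hsol Hf0 Hm0 t Ht.
assert (Hdelta : 0 < delta) by (pose proof (Rmult_le_pos _ _ Hbeta (Rlt_le _ _ HK)); lra).
set (c := delta / 2). set (S0 := f 0 + m 0).
destruct (Req_dec t 0) as [->|Htn].
{ rewrite Rmult_0_r, exp_0. unfold S0. lra. }
assert (0 <= S0 * exp (- c * t) - f t - m t); [|lra].
apply (nonneg_of_deriv_ge_on_neg (fun s => S0 * exp (- c * s) - f s - m s)
  (fun s => S0 * (- c * exp (- c * s))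
            - rhs_f beta delta eta1 K (f s) (m s) - rhs_m beta delta eta2 K (f s) (m s))
  0 t 0); try lra.
- apply right_continuous_at_minus; [apply right_continuous_at_minus|].
  + apply continuity_pt_right_continuous, derivable_continuous_pt.
    exists (S0 * (- c * exp (- c * 0))).
    apply (derivable_pt_lim_scal (fun s => exp (- c * s))), derivable_pt_lim_exp_scal.
  + exact (solution_right_continuous_0 _ _ _ _ Hsol).
  + exact (solution_right_continuous_0 _ _ _ _ (is_solution_swap _ _ _ _ Hsol)).
- rewrite Rmult_0_r, exp_0. unfold S0. lra.
- intros s Hs. destruct (proj1 Hsol s ltac:(lra)) as [Hf Hm].
  apply (derivable_pt_lim_minus (fun s => S0 * exp (- c * s) - f s) m); [|exact Hm].
  apply (derivable_pt_lim_minus (fun s => S0 * exp (- c * s)) f); [|exact Hf].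
  apply (derivable_pt_lim_scal (fun s => exp (- c * s))), derivable_pt_lim_exp_scal.
- intros s Hs Hneg.
  destruct (solution_nonneg _ _ _ _ (Rlt_le _ _ Hdelta) Hsol Hf0 Hm0 s ltac:(lra)).
  pose proof (rhs_sum_le eta1 eta2 (f s) (m s) HbK He1 He2 H H0).
  fold c in H1. assert (0 < c) by (unfold c; lra). nra.
Qed.

Lemma solution_abs_sum_decay eta1 eta2 f m :
  beta * K < 2 * delta -> 0 <= eta1 -> 0 <= eta2 ->
  is_solution beta delta eta1 eta2 K f m -> in_region K (f 0) (m 0) ->
  forall t, 0 <= t ->
    Rabs (f t) + Rabs (m t) <= (Rabs (f 0) + Rabs (m 0)) * exp (- (delta / 2) * t).
Proof.
intros HbK He1 He2 Hsol [Hf0 [Hm0 _]] t Ht.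
assert (Hdelta : 0 <= delta) by (pose proof (Rmult_le_pos _ _ Hbeta (Rlt_le _ _ HK)); lra).
destruct (solution_nonneg _ _ _ _ Hdelta Hsol Hf0 Hm0 t Ht).
rewrite !Rabs_right by lra.
exact (solution_sum_decay _ _ _ _ HbK He1 He2 Hsol Hf0 Hm0 t Ht).
Qed.

End Model.

Theorem mainTheorem17 (beta delta K eta1 eta2 : R) :
  0 < beta < 1 -> 0 < delta < 1 -> 0 < K -> 0 <= eta1 -> 0 <= eta2 ->
  beta * K < 2 * delta ->
  GAS_origin beta delta eta1 eta2 K.
Proof.
intros [Hbeta _] [Hdelta _] HK He1 He2 HbK.
pose proof (solution_abs_sum_decay beta delta K (Rlt_le _ _ Hbeta) HK eta1 eta2)
  as Hdecay.
split; [|split; [|split]].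
- unfold rhs_f, pow32. rewrite sqrt_0. ring.
- unfold rhs_m, pow32. rewrite sqrt_0. ring.
- intros eps Heps. exists eps. split; [exact Heps|].
  intros f m Hsol H0 Hsmall t Ht.
  pose proof (Hdecay f m HbK He1 He2 Hsol H0 t Ht).
  pose proof (exp_neg_mul_le_1 (delta / 2) t ltac:(nra)).
  pose proof (exp_pos (- (delta / 2) * t)).
  pose proof (Rabs_pos (f 0)). pose proof (Rabs_pos (m 0)).
  nra.
- intros f m Hsol H0 eps Heps.
  destruct (exp_decay_eventually_lt (delta / 2) (Rabs (f 0) + Rabs (m 0)) eps
    ltac:(lra) ltac:(pose proof (Rabs_pos (f 0)); pose proof (Rabs_pos (m 0)); lra) Heps)
    as [T [HT Hlt]].
  exists T. intros t Ht.
  eapply Rle_lt_trans; [apply (Hdecay f m HbK He1 He2 Hsol H0); lra|].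
  exact (Hlt t Ht).
Qed.
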